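(* Let $\Gamma$ be a complete dominance graph on vertex set $\{1,\dots,n\}$ with graph Laplacian $L$. Let $\tilde{\Gamma}$ be obtained from $\Gamma$ either by deleting an edge of $\Gamma$ (of weight $w$) or by adding an edge $(i,j)$ with weight $w\in[0,1]$, where $(i,j)\notin E$, and let $\tilde{L}$ be the graph Laplacian of $\tilde{\Gamma}$. Then $\mathrm{hd}(L,\tilde{L})=w$.
   Context: For a weighted digraph with weights $w_{ij}\ge 0$ ($w_{ij}=0$ iff $(i,j)$ is not an edge), $d^{+}(i)=\sum_j w_{ij}$, $D=\mathrm{diag}(d^{+}(1),\dots,d^{+}(n))$, $A=[w_{ij}]$, and the graph Laplacian is $L=D-A$. A complete dominance graph is an acyclic tournament (for each pair of distinct vertices exactly one of $(i,j),(j,i)$ is an edge) in which every edge has weight $1$. For $n\times n$ complex matrices $M,\tilde{M}$ with eigenvalues $\lambda_1,\dots,\lambda_n$ and $\tilde\lambda_1,\dots,\tilde\lambda_n$, the spectral variation is $\mathrm{sv}(M,\tilde M)=\max_i\min_j|\tilde\lambda_i-\lambda_j|$ and the Hausdorff distance is $\mathrm{hd}(M,\tilde M)=\max\{\mathrm{sv}(M,\tilde M),\mathrm{sv}(\tilde M,M)\}$. *)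

From HB Require Import structures.
From mathcomp Require Import all_boot all_order all_algebra.
From mathcomp Require Import complex.
Set Implicit Arguments. Unset Strict Implicit. Unset Printing Implicit Defensive.
Import Order.TTheory GRing.Theory Num.Theory.
Local Open Scope ring_scope.

Section Defs.
Variable R : rcfType.

(* weighted digraph on 'I_n given by its weight matrix A (A k l = w_kl >= 0) *)

Definition laplacian n (A : 'M[R]_n) : 'M[R]_n :=
  diag_mx (\row_k \sum_l A k l) - A.

Definition edge n (A : 'M[R]_n) : rel 'I_n := fun k l => A k l != 0.

Definition acyclic n (A : 'M[R]_n) : Prop :=
  forall (x : 'I_n) (s : seq 'I_n), path (edge A) x s -> last x s = x -> s = [::].

Definition complete_dominance n (A : 'M[R]_n) : Prop :=
  [/\ forall k l, A k l = 0 \/ A k l = 1,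
      forall k, A k k = 0,
      forall k l, k != l -> (A k l == 1) (+) (A l k == 1) &
      acyclic A].

Definition set_entry n (A : 'M[R]_n) (i j : 'I_n) (x : R) : 'M[R]_n :=
  \matrix_(k, l) if (k == i) && (l == j) then x else A k l.

Definition eigs n (M : 'M[R[i]]_n) : seq R[i] :=
  sval (closed_field_poly_normal (char_poly M)).

(* min / max of f over a seq (0 on the empty seq) *)
Definition min_over (T : Type) (f : T -> R) (s : seq T) : R :=
  if s is x :: s' then foldr (fun y acc => Num.min (f y) acc) (f x) s' else 0.
Definition max_over (T : Type) (f : T -> R) (s : seq T) : R :=
  if s is x :: s' then foldr (fun y acc => Num.max (f y) acc) (f x) s' else 0.

Definition spec_var n (M Mt : 'M[R[i]]_n) : R :=
  max_over (fun lt => min_over (fun l => ComplexField.Normc.normc (lt - l)) (eigs M)) (eigs Mt).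

Definition hausdorff n (M Mt : 'M[R[i]]_n) : R :=
  Num.max (spec_var M Mt) (spec_var Mt M).

Definition toCmx n (M : 'M[R]_n) : 'M[R[i]]_n := map_mx (real_complex R) M.

End Defs.

From HB Require Import structures.
From mathcomp Require Import all_boot all_order all_algebra.
From mathcomp Require Import complex fingroup perm.
From mathcomp Require Import lra.
Set Implicit Arguments. Unset Strict Implicit. Unset Printing Implicit Defensive.
Import Order.TTheory GRing.Theory Num.Theory.
Local Open Scope ring_scope.
Local Open Scope complex_scope.

(* Ranking the vertices by out-degree s, a complete dominance graph is the transitive
   tournament A u v = [s v < s u]; its Laplacian is triangular in rank order with
   diagonal s, so its spectrum is {0, ..., n-1}.  Deleting an edge (i,j) keeps the
   Laplacian triangular and lowers the diagonal entry of i by 1.  Adding an edge (i,j)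
   creates a 2-cycle, but conjugating by the backward-difference operator of the rank
   order (which diagonalises the tournament Laplacian) makes the perturbed Laplacian
   triangular again, with the eigenvalue s i + 1 moved to s i + 1 + w.  In both cases
   exactly one point of the spectrum {0, ..., n-1} moves, by some d with |d| <= 1, and
   all other points are at distance >= 1 from it, so the Hausdorff distance is |d|. *)

Lemma det_trig_perm (F : comPzRingType) n (M : 'M[F]_n) (s : {perm 'I_n}) :
  (forall r c, (s r < s c)%N -> M r c = 0) -> \det M = \prod_r M r r.
Proof.
move=> Mtrig; set Ms := row_perm s^-1 (col_perm s^-1 M).
have -> : \det M = \det Ms.
  rewrite /Ms row_permE col_permE !det_mulmx !det_perm odd_permV.
  by rewrite invgK mulrCA -signr_addb addbb mulr1.
rewrite det_trig; last by apply/is_trig_mxP => r c rc; rewrite /Ms !mxE Mtrig ?permKV.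
by rewrite [RHS](reindex_inj (@perm_inj _ s^-1)); apply: eq_bigr => r _; rewrite /Ms !mxE.
Qed.

Section Spectrum.
Variable R : rcfType.
Local Notation C := R[i].

Lemma mem_eigs n (M : 'M[C]_n) x : (x \in eigs M) = (\det (x%:M - M) == 0).
Proof.
rewrite /eigs; case: closed_field_poly_normal => r /= charM.
rewrite -[x \in r]root_prod_XsubC -(scale1r (\prod_(z <- r) _)).
rewrite -(monicP (char_poly_monic M)) -charM rootE /char_poly -horner_evalE.
rewrite -det_map_mx; congr (\det _ == 0); apply/matrixP => a b; rewrite !mxE.
by rewrite rmorphB rmorphMn /= !horner_evalE hornerX hornerC.
Qed.

Lemma eigs_tr n (M : 'M[C]_n) : eigs M^T =i eigs M.
Proof. by move=> x; rewrite !mem_eigs -[\det (_ - M)]det_tr raddfB /= tr_scalar_mx. Qed.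

Lemma eigs_similar n (M N D : 'M[C]_n) :
  D *m M = N *m D -> D \in unitmx -> eigs M =i eigs N.
Proof.
move=> DMN Dunit x; rewrite !mem_eigs.
have detD : \det D != 0 by rewrite -unitfE -unitmxE.
have : D *m (x%:M - M) = (x%:M - N) *m D.
  by rewrite mulmxBr mulmxBl mul_mx_scalar mul_scalar_mx DMN.
by move/(congr1 determinant); rewrite !det_mulmx mulrC => /(mulIf detD) ->.
Qed.

Lemma eigs_trig_perm n (M : 'M[R]_n) (s : {perm 'I_n}) :
  (forall r c, (s r < s c)%N -> M r c = 0) ->
  eigs (toCmx M) =i [seq (M r r)%:C | r : 'I_n].
Proof.
move=> Mtrig x; rewrite mem_eigs (@det_trig_perm _ _ _ s) => [|r c rc]; last first.
  have /negbTE neq_rc : r != c by apply: contraTneq rc => ->; rewrite ltnn.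
  by rewrite !mxE Mtrig // neq_rc mulr0n rmorph0 subr0.
apply/idP/imageP.
  move=> /prodf_eq0 [r _].
  by rewrite !mxE eqxx mulr1n subr_eq0 => /eqP ->; exists r.
by move=> [r _ ->]; apply/prodf_eq0; exists r; rewrite // !mxE eqxx subrr.
Qed.
End Spectrum.

Section HausdorffDistance.
Variable R : rcfType.

Section Extrema.
Variables (T : eqType) (f : T -> R).

Lemma max_over_ub s x : x \in s -> f x <= max_over f s.
Proof.
case: s => // x0 s; elim: s x => [|z s IH] x; first by rewrite inE => /eqP ->.
rewrite inE le_max => /orP [/eqP->|]; first by rewrite IH ?mem_head ?orbT.
by rewrite inE => /orP [/eqP->|xs]; rewrite ?lexx // IH ?inE ?xs ?orbT.
Qed.

Lemma max_over_le s v : 0 <= v -> {in s, forall x, f x <= v} -> max_over f s <= v.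
Proof.
case: s => // x0 s _; elim: s => [|z s IH] fv; first exact/fv/mem_head.
rewrite /= ge_max fv ?inE ?eqxx ?orbT //=; apply: IH => x xs; apply: fv.
by move: xs; rewrite !inE => /orP [] ->; rewrite ?orbT.
Qed.

Lemma min_over_lb s x : x \in s -> min_over f s <= f x.
Proof.
case: s => // x0 s; elim: s x => [|z s IH] x; first by rewrite inE => /eqP ->.
rewrite inE ge_min => /orP [/eqP->|]; first by rewrite IH ?mem_head ?orbT.
by rewrite inE => /orP [/eqP->|xs]; rewrite ?lexx // IH ?inE ?xs ?orbT.
Qed.

Lemma min_over_ge s v x : x \in s -> {in s, forall y, v <= f y} -> v <= min_over f s.
Proof.
case: s => // x0 s _; elim: s => [|z s IH] vf; first exact/vf/mem_head.
rewrite /= le_min vf ?inE ?eqxx ?orbT //=; apply: IH => y ys; apply: vf.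
by move: ys; rewrite !inE => /orP [] ->; rewrite ?orbT.
Qed.

End Extrema.

Lemma normc_real (a b : R) : ComplexField.Normc.normc (a%:C - b%:C) = `|a - b|.
Proof. by rewrite -rmorphB /ComplexField.Normc.normc /= expr0n /= addr0 sqrtr_sqr. Qed.

Lemma hausdorff_shift_eig n (M Mt : 'M[R[i]]_n) (a : 'I_n -> R) (k : 'I_n) (d : R) :
  eigs M =i [seq (a r)%:C | r : 'I_n] ->
  eigs Mt =i [seq (a r + d *+ (r == k))%:C | r : 'I_n] ->
  (forall r, r != k -> `|d| <= `|a r - a k|) ->
  hausdorff M Mt = `|d|.
Proof.
move=> eigsM eigsMt isolated.
have shift_le r : `|d *+ (r == k)| <= `|d| by case: (r == k); rewrite ?normr0.
have svMtM : spec_var M Mt <= `|d|.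
  apply: max_over_le => // _ /[!eigsMt]/imageP [r _ ->].
  have ar : (a r)%:C \in eigs M by rewrite eigsM image_f.
  apply: le_trans (min_over_lb _ ar) _.
  by rewrite normc_real addrC addKr shift_le.
have svMMt : spec_var Mt M <= `|d|.
  apply: max_over_le => // _ /[!eigsM]/imageP [r _ ->].
  have ar : (a r + d *+ (r == k))%:C \in eigs Mt by rewrite eigsMt image_f.
  apply: le_trans (min_over_lb _ ar) _.
  by rewrite normc_real opprD addNKr normrN shift_le.
have ak : (a k)%:C \in eigs M by rewrite eigsM image_f.
have akd : (a k + d *+ (k == k))%:C \in eigs Mt by rewrite eigsMt image_f.
have le_svMMt : `|d| <= spec_var Mt M.
  apply: le_trans (max_over_ub _ ak); apply: (min_over_ge akd).
  move=> _ /[!eigsMt]/imageP [r _ ->]; rewrite normc_real.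
  have [->|rk] := eqVneq r k; first by rewrite mulr1n opprD addNKr normrN.
  by rewrite mulr0n addr0 distrC isolated.
rewrite /hausdorff max_r ?(le_trans svMtM) //; apply/eqP.
by rewrite eq_le svMMt le_svMMt.
Qed.

End HausdorffDistance.

Lemma natr_dist_ge1 (R : numDomainType) (a b : nat) :
  a != b -> 1 <= `|a%:R - b%:R : R|.
Proof.
case: ltngtP => // lt_ab _; last first.
  by rewrite -natrB ?(ltnW lt_ab) // normr_nat ler1n subn_gt0.
by rewrite distrC -natrB ?(ltnW lt_ab) // normr_nat ler1n subn_gt0.
Qed.

Section Laplacian.
Variables (R : rcfType) (n : nat).
Implicit Types (A B : 'M[R]_n) (i j : 'I_n).

Lemma laplacianD A B : laplacian (A + B) = laplacian A + laplacian B.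
Proof.
apply/matrixP => u v; rewrite !mxE.
under eq_bigr do rewrite mxE.
by rewrite big_split /= mulrnDl opprD addrACA.
Qed.

Lemma laplacianZ a A : laplacian (a *: A) = a *: laplacian A.
Proof.
apply/matrixP => u v; rewrite !mxE.
under eq_bigr do rewrite mxE.
by rewrite -mulr_sumr -mulrnAr mulrBr.
Qed.

Lemma laplacian_delta i j :
  laplacian (delta_mx i j : 'M[R]_n) = delta_mx i i - delta_mx i j.
Proof.
apply/matrixP => u v; rewrite !mxE; congr (_ - _).
rewrite (bigD1 j) //= big1 => [|l /negbTE lj]; last by rewrite mxE lj andbF.
rewrite mxE eqxx andbT addr0 -mulrnA.
by case: eqP => [->|_]; rewrite ?mul1n // eq_sym.
Qed.

Lemma set_entryE A i j x : set_entry A i j x = A + (x - A i j) *: delta_mx i j.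
Proof.
apply/matrixP => u v; rewrite !mxE.
case: andP => [[/eqP-> /eqP->]|_]; last by rewrite mulr0 addr0.
by rewrite mulr1 addrC subrK.
Qed.

Lemma laplacian_set_entry A i j x :
  laplacian (set_entry A i j x) =
  laplacian A + (x - A i j) *: (delta_mx i i - delta_mx i j).
Proof. by rewrite set_entryE laplacianD laplacianZ laplacian_delta. Qed.

End Laplacian.

Section RankedTournament.
Variables (R : rcfType) (n : nat) (s : {perm 'I_n}).
Local Notation S u := (nat_of_ord (s u)).

Definition tournament : 'M[R]_n := \matrix_(u, v) (S v < S u)%:R.

Lemma eq_rank u v : (S u == S v) = (u == v).
Proof. by rewrite val_eqE (inj_eq perm_inj). Qed.

Lemma rank_lt_neq u v : (S u < S v)%N -> u != v.
Proof. by apply: contraTneq => ->; rewrite ltnn. Qed.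

Lemma rank_onto m : (m < n)%N -> exists u, S u = m.
Proof. by move=> lt_mn; exists (s^-1 (Ordinal lt_mn))%g; rewrite permKV. Qed.

Lemma sum_rank_delta (F : 'I_n -> R) u : \sum_k (S u == S k)%:R * F k = F u.
Proof.
rewrite (bigD1 u) //= eqxx mul1r big1 ?addr0 // => k /negbTE ku.
by rewrite eq_rank eq_sym ku mul0r.
Qed.

Lemma sum_tournament u : \sum_v tournament u v = (S u)%:R.
Proof.
under eq_bigr do rewrite mxE.
rewrite (reindex_inj (@perm_inj _ s^-1)) /=; under eq_bigr do rewrite permKV.
rewrite -natr_sum -(big_mkcond (fun t : 'I_n => t < S u)%N (fun _ => 1%N)) /=.
by rewrite (big_ord_narrow (ltnW (ltn_ord (s u)))) sum1_card card_ord.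
Qed.

Lemma laplacian_tournament :
  laplacian tournament = \matrix_(u, v) ((S u)%:R *+ (u == v) - (S v < S u)%:R).
Proof. by apply/matrixP => u v; rewrite !mxE sum_tournament. Qed.

Definition rank_diag : 'M[R]_n := diag_mx (\row_u (S u)%:R).

Definition rank_shift : 'M[R]_n := \matrix_(u, v) (S u == (S v).+1)%:R.

Definition diffmx : 'M[R]_n := 1%:M - rank_shift.

Definition rank_step (t : nat) : 'rV[R]_n := \row_v (S v <= t)%:R.

Lemma det_diffmx : \det diffmx = 1.
Proof.
rewrite (@det_trig_perm _ _ _ s) => [|u v uv]; last first.
  by rewrite !mxE (negbTE (rank_lt_neq uv)) ltn_eqF ?subrr // (ltn_trans uv).
by apply: big1 => u _; rewrite !mxE eqxx ltn_eqF ?subr0.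
Qed.

Lemma diffmx_laplacian : diffmx *m laplacian tournament = rank_diag *m diffmx.
Proof.
rewrite laplacian_tournament; apply/matrixP => r c.
rewrite mul_diag_mx mulmxBl mul1mx !mxE.
under eq_bigr do rewrite !mxE.
case Sr: (S r) => [|m].
  by rewrite big1 => [|k _] /=; rewrite ?mul0r ?mul0rn ?subr0 ?ltn0 ?subrr.
have [u Su] : exists u, S u = m by apply/rank_onto/ltnW; rewrite -Sr.
rewrite -Su; under eq_bigr do rewrite eqSS.
rewrite sum_rank_delta eqSS -[u == c]eq_rank mulrBr mulr_natr.
case: (ltngtP (S c) (S u)) => [lt_cu|lt_uc|->].
- by rewrite ltnS (ltnW lt_cu) mulr0n mulr0 subr0 sub0r opprK subrK.
- by rewrite ltnS leqNgt lt_uc !mulr0n mulr0 !subr0.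
- rewrite ltnSn !mulr1n mulr0n mulr1 subr0 -natr1; lra.
Qed.

Lemma rank_step_diffmx u : rank_step (S u) *m diffmx = delta_mx 0 u.
Proof.
apply/rowP => c; rewrite mulmxBr mulmx1 !mxE -eq_rank eq_sym.
under eq_bigr do rewrite !mxE mulrC.
have [lt_cn|le_nc] := ltnP (S c).+1 n.
  have [k Sk] := rank_onto lt_cn.
  rewrite -Sk; under eq_bigr do rewrite eq_sym.
  rewrite sum_rank_delta Sk; case: ltngtP => //= _; rewrite ?subrr ?subr0 //.
rewrite big1 => [|k _]; last by rewrite ltn_eqF ?mul0r // (leq_trans (ltn_ord _) le_nc).
have le_uc : (S u <= S c)%N by rewrite -ltnS (leq_trans (ltn_ord _) le_nc).
by rewrite subr0 eqn_leq le_uc.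
Qed.

Lemma eigs_laplacian_tournament :
  eigs (toCmx (laplacian tournament)) =i [seq ((S r)%:R)%:C | r : 'I_n].
Proof.
move=> x; rewrite (eigs_trig_perm (s := s)) => [|r c rc]; last first.
  by rewrite laplacian_tournament mxE (negbTE (rank_lt_neq rc)) ltnNge (ltnW rc) subrr.
congr (x \in _); apply: eq_map => r.
by rewrite laplacian_tournament mxE eqxx ltnn mulr1n subr0.
Qed.

Lemma eigs_delete_edge i j : (S j < S i)%N ->
  eigs (toCmx (laplacian (set_entry tournament i j 0))) =i
  [seq ((S r)%:R + (-1) *+ (r == i))%:C | r : 'I_n].
Proof.
move=> ji; have Aij : tournament i j = 1 by rewrite mxE ji.
have ij : i != j by rewrite eq_sym rank_lt_neq.
move=> x; rewrite laplacian_set_entry Aij sub0r (eigs_trig_perm (s := s)) => [|r c rc].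
  congr (x \in _); apply: eq_map => r.
  rewrite laplacian_tournament !mxE eqxx ltnn mulr1n subr0 andbb.
  have [ri | _] /= := eqVneq r i; last by rewrite subrr mulr0 mulr0n !addr0.
  by rewrite ri (negbTE ij) subr0 mulr1n mulr1.
rewrite laplacian_tournament !mxE (negbTE (rank_lt_neq rc)) ltnNge (ltnW rc).
rewrite !mulr0n subr0 add0r.
have [ri | _] /= := eqVneq r i; last by rewrite subrr mulr0.
rewrite {}ri in rc.
by rewrite -[c == i]eq_rank -[c == j]eq_rank !gtn_eqF ?(ltn_trans ji) // subrr mulr0.
Qed.

Lemma eigs_add_edge i j k w : (S i < S j)%N -> S k = (S i).+1 ->
  eigs (toCmx (laplacian (set_entry tournament i j w))) =i
  [seq ((S r)%:R + w *+ (r == k))%:C | r : 'I_n].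
Proof.
move=> ij Sk; have Aij : tournament i j = 0 by rewrite mxE ltnNge (ltnW ij).
set T := rank_diag +
  w *: (diffmx *m delta_mx i 0 *m (rank_step (S i) - rank_step (S j))).
have similar : diffmx *m laplacian (set_entry tournament i j w) = T *m diffmx.
  rewrite laplacian_set_entry Aij subr0 mulmxDr diffmx_laplacian (mulmxDl rank_diag).
  rewrite -scalemxAl -!mulmxA [(_ - _) *m diffmx]mulmxBl !rank_step_diffmx.
  by rewrite [delta_mx i 0 *m _]mulmxBr !mul_delta_mx scalemxAr.
have T_entry r c : T r c = (S r)%:R *+ (r == c) +
    w * (((r == i)%:R - (r == k)%:R) * ((S c <= S i)%:R - (S c <= S j)%:R)).
  by rewrite /T -colE !mxE big_ord1 !mxE -Sk eq_rank.
have T_trig r c : (S c < S r)%N -> T r c = 0.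
  move=> cr; rewrite T_entry eq_sym (negbTE (rank_lt_neq cr)) mulr0n add0r.
  have [le_ri | lt_ir] := leqP (S r) (S i).+1.
    have ci : (S c <= S i)%N by rewrite -ltnS (leq_trans cr).
    by rewrite ci (leq_trans ci (ltnW ij)) subrr !mulr0.
  rewrite -[r == i]eq_rank -[r == k]eq_rank Sk !gtn_eqF ?(ltnW lt_ir) //.
  by rewrite subrr mul0r mulr0.
have T_diag r : T r r = (S r)%:R + w *+ (r == k).
  rewrite T_entry eqxx mulr1n; congr (_ + _).
  have [-> | ri] := eqVneq r i.
    have /negbTE ik : i != k by rewrite -eq_rank Sk ltn_eqF.
    by rewrite ik leqnn (ltnW ij) subrr !mulr0 mulr0n.
  have [-> | rk] := eqVneq r k; last by rewrite subrr mul0r mulr0 mulr0n.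
  by rewrite Sk ltnn ij !mulr0n !mulr1n sub0r mulrNN !mulr1.
have Dunit : toCmx diffmx \in unitmx by rewrite map_unitmx unitmxE det_diffmx unitr1.
move=> x; rewrite (eigs_similar (N := toCmx T) _ Dunit); last first.
  by rewrite -!map_mxM similar.
rewrite -eigs_tr map_trmx (eigs_trig_perm (s := s)) => [|r c rc]; last by rewrite mxE T_trig.
by congr (x \in _); apply: eq_map => r; rewrite mxE T_diag.
Qed.

End RankedTournament.

Arguments tournament {R n} s.

Section CompleteDominance.
Variables (R : rcfType) (n : nat) (A : 'M[R]_n).
Hypothesis A01 : forall u v, A u v = 0 \/ A u v = 1.
Hypothesis A_irr : forall u, A u u = 0.
Hypothesis A_tour : forall u v, u != v -> (A u v == 1) (+) (A v u == 1).
Hypothesis A_acyc : acyclic A.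

Lemma dominance_trans u v x : A u v = 1 -> A v x = 1 -> A u x = 1.
Proof.
have edge1 a b : A a b = 1 -> edge A a b by rewrite /edge => ->; rewrite oner_neq0.
move=> /edge1 uv; have [<- /edge1 vu | ux /edge1 vx] := eqVneq u x.
  by have := @A_acyc u [:: v; u]; rewrite /= uv vu => /(_ isT erefl).
have := A_tour ux; case: eqP => //= _ /eqP /edge1 xu.
by have := @A_acyc u [:: v; x; u]; rewrite /= uv vx xu => /(_ isT erefl).
Qed.

Definition outdeg u : nat := #|[set v | A u v == 1]|.

Lemma outdeg_lt u v : A u v = 1 -> (outdeg v < outdeg u)%N.
Proof.
move=> uv; apply/proper_card/properP; split.
  by apply/subsetP => x; rewrite !inE => /eqP vx; rewrite (dominance_trans uv vx).
by exists v; rewrite !inE ?uv ?A_irr // eq_sym oner_eq0.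
Qed.

Lemma outdeg_ltn u : (outdeg u < n)%N.
Proof.
rewrite -[n]card_ord -cardsT; apply/proper_card/properP; split; first exact: subsetT.
by exists u; rewrite !inE // A_irr eq_sym oner_eq0.
Qed.

Lemma dominance_outdeg u v : A u v = (outdeg v < outdeg u)%:R.
Proof.
have [uv|uv] := A01 u v; last by rewrite uv outdeg_lt.
case: ltnP => //= lt_vu; rewrite uv.
have /A_tour : u != v by apply: contraTneq lt_vu => ->; rewrite ltnn.
rewrite uv eq_sym oner_eq0 /= => /eqP /outdeg_lt.
by rewrite ltnNge (ltnW lt_vu).
Qed.

Lemma outdeg_inj : injective outdeg.
Proof.
move=> u v eq_uv; apply/eqP; apply: contraT => /A_tour.
by rewrite !dominance_outdeg eq_uv ltnn eq_sym oner_eq0.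
Qed.

End CompleteDominance.

Lemma complete_dominance_tournament (R : rcfType) n (A : 'M[R]_n) :
  complete_dominance A -> exists s : {perm 'I_n}, A = tournament s.
Proof.
case=> A01 A_irr A_tour A_acyc.
have rank_inj : injective (fun u => Ordinal (outdeg_ltn A_irr u)).
  by move=> u v [/(outdeg_inj A01 A_irr A_tour A_acyc)].
exists (perm rank_inj); apply/matrixP => u v.
by rewrite (dominance_outdeg A01 A_irr A_tour A_acyc) mxE !permE.
Qed.

Theorem theorem3p7 (R : rcfType) (n : nat) (A At : 'M[R]_n)
    (i j : 'I_n) (w : R) :
  complete_dominance A ->
  ( (* delete the edge (i,j) of Gamma, of weight w *)
    (A i j != 0 /\ w = A i j /\ At = set_entry A i j 0)
    \/
    (* add a (non-loop) edge (i,j) not in E, of weight w in [0,1] *)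
    (i != j /\ A i j = 0 /\ 0 <= w <= 1 /\ At = set_entry A i j w) ) ->
  hausdorff (toCmx (laplacian A)) (toCmx (laplacian At)) = w.
Proof.
move=> /complete_dominance_tournament [s ->].
have isolated (d : R) r k : `|d| <= 1 -> r != k -> `|d| <= `|(s r)%:R - (s k)%:R : R|.
  by move=> d_le1 rk; rewrite (le_trans d_le1) // natr_dist_ge1 // eq_rank.
case=> [[Aij [-> ->]] | [ij [Aij [/andP [w_ge0 w_le1] ->]]]].
  have ji : (s j < s i)%N by move: Aij; rewrite mxE; case: ltnP => //; rewrite eqxx.
  rewrite mxE ji -[RHS](normrN1 R).
  apply: hausdorff_shift_eig (eigs_laplacian_tournament s) (eigs_delete_edge ji) _.
  by move=> r; apply: isolated; rewrite normrN1.
have lt_ij : (s i < s j)%N.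
  rewrite ltn_neqAle eq_rank ij leqNgt.
  by move: Aij; rewrite mxE; case: ltnP => // _ /eqP; rewrite oner_eq0.
have [k Sk] := rank_onto s (leq_ltn_trans lt_ij (ltn_ord (s j))).
rewrite -[RHS](ger0_norm w_ge0).
apply: hausdorff_shift_eig (eigs_laplacian_tournament s) (eigs_add_edge w lt_ij Sk) _.
by move=> r; apply: isolated; rewrite ger0_norm.
Qed.
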